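(* If a filtered group $G=(G_k)\subset S_\infty$ is weakly saturated and $G_5\ne\{1_5\}$, then $G=S_\infty$ or $G=S_\infty^*$.
   Context: A filtered group is a family $G=(G_k)_{k\ge0}$ of subgroups $G_k\subset S_k$ with $\sigma\otimes\tau\in G_{k+l}$ for $\sigma\in G_k,\tau\in G_l$ ($\sigma\otimes\tau$ acts as $\sigma$ on the first $k$ points and as $\tau$ shifted on the last $l$). $S_\infty=(S_k)$, $S_\infty^*=(S_k^* )$ with $S_k^*=\{\sigma\in S_k:\sigma(r)\equiv r\bmod 2\ \forall r\}$. $G$ is weakly saturated if whenever $\sigma\in G_k$ satisfies $\sigma(i+1)=\sigma(i)\pm1$ for some $i$, the permutation $\sigma^{(i,i+1)}\in S_{k-2}$ obtained by deleting the points $i,i+1$ and their images $\sigma(i),\sigma(i+1)$ (and relabelling order-preservingly) belongs to $G_{k-2}$. *)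

From mathcomp Require Import all_boot all_fingroup.
Set Implicit Arguments. Unset Strict Implicit. Unset Printing Implicit Defensive.
Local Open Scope group_scope.

Definition tensor_fun k l (s : {perm 'I_k}) (t : {perm 'I_l}) (i : 'I_(k + l))
  : 'I_(k + l) :=
  match split i with
  | inl j => lshift l (s j)
  | inr j => rshift k (t j)
  end.

Lemma tensor_fun_inj k l (s : {perm 'I_k}) (t : {perm 'I_l}) :
  injective (tensor_fun s t).
Proof.
move=> x y; rewrite /tensor_fun -{2}(splitK x) -{2}(splitK y).
case: (split x) => a; case: (split y) => b /= /eqP;
  rewrite ?eq_lrshift ?eq_rlshift ?eq_lshift ?eq_rshift // => /eqP/perm_inj->//.
Qed.

Definition tensor k l (s : {perm 'I_k}) (t : {perm 'I_l}) : {perm 'I_(k + l)} :=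
  perm (@tensor_fun_inj k l s t).

Definition filtered (G : forall k, {group {perm 'I_k}}) : Prop :=
  forall k l (s : {perm 'I_k}) (t : {perm 'I_l}),
    s \in G k -> t \in G l -> tensor s t \in G (k + l).

(* Deletion of the points i, i+1 (0-based) of sigma in S_(n+2) and of their
   images, relabelled order-preservingly, giving an element of S_n.
   The raw map below is the paper's formula; it is a permutation whenever
   sigma(i+1) = sigma(i) +- 1 (the only case where it is used); otherwise we
   default to the identity to keep the definition total. *)
Definition del_raw n (s : {perm 'I_n.+2}) (i : nat) (j : 'I_n) : 'I_n :=
  let p := if j < i then val j else (val j).+2 in
  let q := val (s (inord p)) in
  let m := minn (val (s (inord i))) (val (s (inord i.+1))) in
  insubd j (if q < m then q else q - 2).

Definition del_fun n (s : {perm 'I_n.+2}) (i : nat) : 'I_n -> 'I_n :=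
  if injectiveb (del_raw s i) then del_raw s i else id.

Lemma del_fun_inj n (s : {perm 'I_n.+2}) (i : nat) : injective (del_fun s i).
Proof.
rewrite /del_fun; case: injectiveP => // _ x y; exact.
Qed.

Definition del n (s : {perm 'I_n.+2}) (i : nat) : {perm 'I_n} :=
  perm (@del_fun_inj n s i).

(* Weak saturation (with k = n + 2 and 0-based point i, i+1 < k). *)
Definition weakly_saturated (G : forall k, {group {perm 'I_k}}) : Prop :=
  forall n (s : {perm 'I_n.+2}) (i : nat),
    s \in G n.+2 -> i.+1 < n.+2 ->
    (val (s (inord i.+1)) = (val (s (inord i))).+1 \/
     (val (s (inord i.+1))).+1 = val (s (inord i))) ->
    del s i \in G n.

Definition Sstar k : {set {perm 'I_k}} :=
  [set s : {perm 'I_k} | [forall r : 'I_k, odd (s r) == odd r]].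

From mathcomp Require Import all_boot all_fingroup zify.

(* A nontrivial element of G_5 yields, through products, tensor products and
   deletions, either the transposition (0 1) in G_2 or (0 2) in G_3; this is
   checked by computation, with one recorded derivation per element of S_5.
   Tensoring with identities turns these into all transpositions (x, x+1),
   resp. (x, x+2), which generate S_k, resp. S_k^*.  In the second case an
   element of G_k outside S_k^* conjugates a parity-preserving transposition
   of S_(k+2) into one of mixed parity, hence puts (0 1) in G_(k+2); deleting
   pairs of fixed points, after one extra tensor factor if needed, carries it
   down to G_2 and G = S_oo.  Otherwise G = S^*. *)

Local Open Scope group_scope.

Section TpermGeneration.
Variables (T : finType) (U : eqType) (f : T -> U) (H : {group {perm T}}).
Hypothesis tperm_in : forall x y, f x = f y -> tperm x y \in H.

Lemma perm_in_of_tperm (s : {perm T}) : (forall z, f (s z) = f z) -> s \in H.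
Proof.
have [n] := ubnP #|[pred x | s x != x]|.
elim: n s => // n IHn s /ltnSE-le_s_n sf.
case: (pickP (fun x => s x != x)) => [x s_x | s_id]; last first.
  have -> : s = 1 by apply/permP => x; apply/eqP/idPn; rewrite perm1 s_id.
  exact: group1.
set t := tperm x (s^-1 x).
have fx : f x = f (s^-1 x) by rewrite -{1}(permKV s x) sf.
have ft z : f (t z) = f z by rewrite /t; case: tpermP => [->|->|].
rewrite -[s](mulKg t) tpermV groupM ?tperm_in //.
apply: IHn => [|z]; last by rewrite permM sf ft.
rewrite (cardD1 x) !inE s_x in le_s_n; apply: leq_ltn_trans le_s_n.
apply: subset_leq_card; apply/subsetP=> y.
rewrite !inE permM permE /= -(canF_eq (permK _)).
have [-> | ne_yx] := eqVneq y x; first by rewrite permKV eqxx.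
by case: (s y =P x) => // -> _; rewrite eq_sym.
Qed.

End TpermGeneration.

Lemma tperm_in_of_translates k (H : {group {perm 'I_k}}) c :
  (forall x y : 'I_k, y = x + c.+1 :> nat -> tperm x y \in H) ->
  forall x y : 'I_k, x = y %[mod c.+1] -> tperm x y \in H.
Proof.
move=> Hc.
have chain n : forall x y : 'I_k, y = x + n.+1 * c.+1 :> nat -> tperm x y \in H.
  elim: n => [|n IH] x y yx; first by apply: Hc; lia.
  have y'k : x + n.+1 * c.+1 < k by have := ltn_ord y; lia.
  pose y' := Ordinal y'k.
  have [neq_y'x neq_yx] : y' != x /\ y != x by split; rewrite -val_eqE /=; lia.
  have -> : tperm x y = tperm x y' ^ tperm y' y by rewrite tpermJ tpermL tpermD.
  by rewrite groupJ ?(IH x y') ?(Hc y' y) //=; lia.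
have tperm_lt (x y : 'I_k) : x < y -> c.+1 %| y - x -> tperm x y \in H.
  move=> xy /dvdnP [[|q] yx]; first by move/eqP: yx; rewrite mul0n subn_eq0 leqNgt xy.
  by apply: (chain q); rewrite -yx subnKC // (ltnW xy).
move=> x y /eqP; case: (ltngtP x y) => [xy|yx|/val_inj->].
- by rewrite eq_sym eqn_mod_dvd ?(ltnW xy) //; apply: tperm_lt.
- by rewrite eqn_mod_dvd ?(ltnW yx) // tpermC; apply: tperm_lt.
- by rewrite tperm1 group1.
Qed.

Lemma val_tperm k (x y z : 'I_k) : nat_of_ord (tperm x y z) =
  if z == x :> nat then nat_of_ord y else if z == y :> nat then nat_of_ord x else nat_of_ord z.
Proof.
case: (eqVneq z x) => [->|nx]; first by rewrite tpermL eqxx.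
rewrite val_eqE (negbTE nx).
case: (eqVneq z y) => [->|ny]; first by rewrite tpermR eqxx.
by rewrite val_eqE (negbTE ny) tpermD // eq_sym.
Qed.

Lemma tensor_lshift k l (s : {perm 'I_k}) (t : {perm 'I_l}) (j : 'I_k) :
  tensor s t (lshift l j) = lshift l (s j).
Proof. by rewrite permE /tensor_fun (unsplitK (inl _ j)). Qed.

Lemma tensor_rshift k l (s : {perm 'I_k}) (t : {perm 'I_l}) (j : 'I_l) :
  tensor s t (rshift k j) = rshift k (t j).
Proof. by rewrite permE /tensor_fun (unsplitK (inr _ j)). Qed.

Lemma del_of_raw n (s : {perm 'I_n.+2}) i (g : {perm 'I_n}) : del_raw s i =1 g -> del s i = g.
Proof.
move=> sg; apply/permP => j; rewrite permE /del_fun.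
have /injectiveP-> : injective (del_raw s i) by apply: eq_inj (@perm_inj _ g) _.
exact: sg.
Qed.

Definition gap_tperm d : {perm 'I_d.+2} := tperm ord0 ord_max.

Lemma SstarP k (s : {perm 'I_k}) :
  reflect (forall z, odd (s z) = odd z) (s \in Sstar k).
Proof. by rewrite inE; apply: (iffP forallP) => h z; [exact/eqP | rewrite h]. Qed.

Lemma tperm_Sstar k (x y : 'I_k) : odd x = odd y -> tperm x y \in Sstar k.
Proof. by move=> xy; apply/SstarP => z; case: tpermP => [->|->|]. Qed.

(* The points 0 and 1 are given existentially, so that [K] need not be of the form [n.+2]. *)
Definition has_tperm01 {K} (H : {set {perm 'I_K}}) :=
  exists x y : 'I_K, [/\ x = 0 :> nat, y = 1%N :> nat & tperm x y \in H].

Lemma has_tperm01_of_mixed_tperm K (H : {group {perm 'I_K}}) (u v : 'I_K) :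
  Sstar K \subset H -> odd u != odd v -> tperm u v \in H -> has_tperm01 H.
Proof.
move=> SH; wlog eu : u v / ~~ odd u => [W uv uvH|uv uvH].
  case/boolP: (odd u) => [ou|eu]; last exact: W eu uv uvH.
  have ev : ~~ odd v by move: uv; rewrite ou; case: odd.
  by apply: (W v u ev); rewrite 1?eq_sym 1?tpermC.
have ov : odd v by move: uv; rewrite (negbTE eu); case: odd.
have K1 : 1 < K by have := ltn_ord v; case: (nat_of_ord v) ov => // n _; lia.
pose x0 : 'I_K := Ordinal (ltnW K1); pose x1 : 'I_K := Ordinal K1.
have Sconj g (t w : 'I_K) : g \in H -> odd t = odd w -> g ^ tperm t w \in H.
  by move=> gH tw; rewrite groupJ // (subsetP SH) // tperm_Sstar.
have [neq_uv neq_x0v] : u != v /\ x0 != v.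
  by split; apply/negP => /eqP vE; move: uv ov; rewrite -vE ?eqxx.
have x0vH : tperm x0 v \in H.
  have -> : tperm x0 v = tperm u v ^ tperm u x0 by rewrite tpermJ tpermL tpermD.
  by apply: Sconj uvH _; rewrite (negbTE eu).
exists x0, x1; split; [by [] | by [] |].
have neq_x1x0 : x1 != x0 by rewrite -val_eqE.
have -> : tperm x0 x1 = tperm x0 v ^ tperm v x1 by rewrite tpermJ tpermL tpermD // eq_sym.
by apply: Sconj x0vH _; rewrite ov.
Qed.

Lemma gap_tperm0_of_has_tperm01 (H : {set {perm 'I_2}}) : has_tperm01 H -> gap_tperm 0 \in H.
Proof.
case=> x [y [x0 y1]].
have -> : x = ord0 by apply: ord_inj.
have -> : y = ord_max by apply: ord_inj.
exact.
Qed.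

Definition is_perm_seq k (l : seq nat) := [&& size l == k, uniq l & all (fun x => x < k) l].

Definition nth_ord k (l : seq nat) (i : 'I_k) : 'I_k := insubd i (nth 0 l i).

(* Falls back to the identity when [l] does not list the images of a permutation. *)
Definition perm_of_seq_fun k l : 'I_k -> 'I_k :=
  if injectiveb (nth_ord k l) then nth_ord k l else id.

Lemma perm_of_seq_fun_inj k l : injective (perm_of_seq_fun k l).
Proof. by rewrite /perm_of_seq_fun; case: injectiveP => // _ x y. Qed.

Definition perm_of_seq k l : {perm 'I_k} := perm (perm_of_seq_fun_inj k l).

Lemma perm_of_seqE k l (i : 'I_k) : is_perm_seq k l -> perm_of_seq k l i = nth 0 l i :> nat.
Proof.
case/and3P=> /eqP sz un /allP lt_l.
have val_nth_ord j : nth_ord k l j = nth 0 l j :> nat.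
  by rewrite insubdK // unfold_in /= lt_l // mem_nth // sz.
have inj : injective (nth_ord k l).
  move=> x y /(congr1 (@nat_of_ord k)); rewrite !val_nth_ord => /eqP.
  by rewrite nth_uniq ?sz // => /eqP/val_inj.
by rewrite permE /perm_of_seq_fun (introT (injectiveP _) inj).
Qed.

Lemma eq_perm_of_seq k l (s : {perm 'I_k}) : is_perm_seq k l ->
  (forall i : 'I_k, s i = nth 0 l i :> nat) -> s = perm_of_seq k l.
Proof. by move=> kl sl; apply/permP => i; apply: val_inj; rewrite /= sl perm_of_seqE. Qed.

Lemma perm_of_seq_iota k : perm_of_seq k (iota 0 k) = 1.
Proof.
apply/esym/eq_perm_of_seq => [|i]; last by rewrite perm1 nth_iota.
by rewrite /is_perm_seq size_iota eqxx iota_uniq; apply/allP => x; rewrite mem_iota.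
Qed.

Lemma perm_of_seqM k l1 l2 : is_perm_seq k l1 -> is_perm_seq k l2 ->
  is_perm_seq k (map (nth 0 l2) l1) ->
  perm_of_seq k l1 * perm_of_seq k l2 = perm_of_seq k (map (nth 0 l2) l1).
Proof.
move=> kl1 kl2 kl; apply: eq_perm_of_seq => // i.
case/and3P: (kl1) => /eqP sz _ _.
by rewrite permM !perm_of_seqE // (nth_map 0) // sz.
Qed.

Lemma perm_of_seq_tensor k m l1 l2 : is_perm_seq k l1 -> is_perm_seq m l2 ->
  is_perm_seq (k + m) (l1 ++ map (addn k) l2) ->
  tensor (perm_of_seq k l1) (perm_of_seq m l2) = perm_of_seq (k + m) (l1 ++ map (addn k) l2).
Proof.
move=> kl1 kl2 kl; apply: eq_perm_of_seq => // i.
case/and3P: (kl1) => /eqP sz1 _ _; case/and3P: (kl2) => /eqP sz2 _ _.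
case: (split_ordP i) => j ->.
  by rewrite tensor_lshift /= perm_of_seqE // nth_cat sz1 ltn_ord.
rewrite tensor_rshift /= perm_of_seqE // nth_cat sz1 ltnNge leq_addr /= addKn.
by rewrite (nth_map 0) // sz2.
Qed.

Definition del_seq n (l : seq nat) i :=
  mkseq (fun j => let p := if j < i then j else j.+2 in
                  let q := nth 0 l p in
                  let m := minn (nth 0 l i) (nth 0 l i.+1) in
                  if q < m then q else q - 2) n.

Lemma perm_of_seq_del n l i : is_perm_seq n.+2 l -> i.+1 < n.+2 ->
  is_perm_seq n (del_seq n l i) -> del (perm_of_seq n.+2 l) i = perm_of_seq n (del_seq n l i).
Proof.
move=> kl lt_i kdl; apply: del_of_raw => j; apply: val_inj; have jn := ltn_ord j.
rewrite /del_raw /= !perm_of_seqE // !inordK; try (by case: ifP => _; lia); try lia.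
case/and3P: kdl => /eqP sz _ /allP lt_dl.
rewrite nth_mkseq //= insubdK //.
by have := lt_dl _ (@mem_nth _ 0 (del_seq n l i) j _); rewrite sz nth_mkseq //=; apply.
Qed.

(* A derivation extends a list of facts [(k, l)], each asserting
   [perm_of_seq k l \in G k]; steps refer to earlier facts by their index.
   An index out of range reads the trivially true fact [(0, [::])]. *)
Inductive derivation_step :=
  | StepId of nat
  | StepMul of nat & nat
  | StepTensor of nat & nat
  | StepDel of nat & nat.

Definition perm_fact := (nat * seq nat)%type.

Definition adjacent_at (l : seq nat) i :=
  (nth 0 l i.+1 == (nth 0 l i).+1) || ((nth 0 l i.+1).+1 == nth 0 l i).

Definition derive_step (fs : seq perm_fact) st : option perm_fact :=
  let fact a := nth (0, [::]) fs a in
  match st with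
  | StepId k => Some (k, iota 0 k)
  | StepMul a b =>
      if (fact a).1 == (fact b).1 then Some ((fact a).1, map (nth 0 (fact b).2) (fact a).2)
      else None
  | StepTensor a b =>
      Some ((fact a).1 + (fact b).1, (fact a).2 ++ map (addn (fact a).1) (fact b).2)
  | StepDel a i =>
      if (fact a).1 is n.+2 then
        if (i.+1 < n.+2) && adjacent_at (fact a).2 i then Some (n, del_seq n (fact a).2 i)
        else None
      else None
  end.

Fixpoint derive (fs : seq perm_fact) sts : option (seq perm_fact) :=
  if sts is st :: sts' then
    if derive_step fs st is Some f then
      if is_perm_seq f.1 f.2 then derive (rcons fs f) sts' else None
    else None
  else Some fs.

Definition certifies (l : seq nat) (c : seq derivation_step) :=
  if derive [:: (5, l)] c is Some fs then
    ((2, [:: 1; 0]%N) \in fs) || ((3, [:: 2; 1; 0]%N) \in fs)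
  else false.

Definition certificates : seq (seq nat * seq derivation_step) := [::
  ([:: 0; 1; 2; 4; 3], [:: StepId 1; StepDel 0 0; StepTensor 1 2; StepDel 3 0]);
  ([:: 0; 1; 3; 2; 4], [:: StepId 1; StepTensor 0 1; StepDel 2 0; StepDel 3 2]);
  ([:: 0; 1; 3; 4; 2], [:: StepId 1; StepDel 0 0; StepTensor 1 2; StepTensor 0 1;
      StepDel 4 0; StepMul 3 5; StepDel 6 0]);
  ([:: 0; 1; 4; 2; 3], [:: StepId 1; StepTensor 0 1; StepTensor 1 0; StepMul 2 3;
      StepDel 4 0; StepDel 5 0]);
  ([:: 0; 1; 4; 3; 2], [:: StepDel 0 0]);
  ([:: 0; 2; 1; 3; 4], [:: StepId 1; StepDel 0 3; StepTensor 1 2; StepDel 3 0]);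
  ([:: 0; 2; 1; 4; 3], [:: StepId 1; StepDel 0 1; StepTensor 1 2; StepDel 3 0]);
  ([:: 0; 2; 3; 1; 4], [:: StepId 1; StepTensor 0 1; StepDel 2 4; StepTensor 1 0;
      StepDel 4 0; StepMul 3 5; StepDel 6 0]);
  ([:: 0; 2; 3; 4; 1], [:: StepId 1; StepDel 0 1; StepTensor 1 2; StepDel 3 0]);
  ([:: 0; 2; 4; 1; 3], [:: StepId 1; StepMul 0 0; StepDel 2 1; StepTensor 1 3; StepDel 4 0]);
  ([:: 0; 2; 4; 3; 1], [:: StepId 1; StepDel 0 2; StepTensor 1 2; StepDel 3 0]);
  ([:: 0; 3; 1; 2; 4], [:: StepId 1; StepTensor 1 0; StepDel 2 0; StepTensor 0 1;
      StepDel 4 4; StepMul 3 5; StepDel 6 0]);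
  ([:: 0; 3; 1; 4; 2], [:: StepId 1; StepMul 0 0; StepDel 2 1; StepTensor 1 3; StepDel 4 0]);
  ([:: 0; 3; 2; 1; 4], [:: StepId 1; StepTensor 0 1; StepDel 2 4; StepTensor 1 3; StepDel 4 0]);
  ([:: 0; 3; 2; 4; 1], [:: StepId 1; StepDel 0 1; StepTensor 1 2; StepDel 3 0]);
  ([:: 0; 3; 4; 1; 2], [:: StepId 1; StepTensor 1 0; StepDel 2 0; StepTensor 3 1;
      StepMul 0 4; StepDel 5 0]);
  ([:: 0; 3; 4; 2; 1], [:: StepId 1; StepDel 0 1; StepTensor 1 2; StepDel 3 0]);
  ([:: 0; 4; 1; 2; 3], [:: StepId 1; StepDel 0 2; StepTensor 1 2; StepDel 3 0]);
  ([:: 0; 4; 1; 3; 2], [:: StepId 1; StepDel 0 3; StepTensor 1 2; StepDel 3 0]);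
  ([:: 0; 4; 2; 1; 3], [:: StepId 1; StepDel 0 2; StepTensor 1 2; StepDel 3 0]);
  ([:: 0; 4; 2; 3; 1], [:: StepId 1; StepDel 0 2; StepTensor 1 2; StepDel 3 0]);
  ([:: 0; 4; 3; 1; 2], [:: StepId 1; StepDel 0 3; StepTensor 1 2; StepDel 3 0]);
  ([:: 0; 4; 3; 2; 1], [:: StepId 1; StepDel 0 1; StepTensor 1 2; StepDel 3 0]);
  ([:: 1; 0; 2; 3; 4], [:: StepId 1; StepTensor 0 1; StepDel 2 2; StepDel 3 2]);
  ([:: 1; 0; 2; 4; 3], [:: StepId 1; StepDel 0 0; StepTensor 1 2; StepDel 3 0]);
  ([:: 1; 0; 3; 2; 4], [:: StepId 1; StepTensor 0 1; StepDel 2 0; StepDel 3 2]);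
  ([:: 1; 0; 3; 4; 2], [:: StepDel 0 2; StepDel 0 0; StepMul 1 2]);
  ([:: 1; 0; 4; 2; 3], [:: StepDel 0 0; StepDel 0 3; StepMul 1 2]);
  ([:: 1; 0; 4; 3; 2], [:: StepDel 0 0]);
  ([:: 1; 2; 0; 3; 4], [:: StepId 1; StepDel 0 3; StepTensor 1 2; StepTensor 0 1;
      StepDel 4 3; StepMul 3 5; StepDel 6 0]);
  ([:: 1; 2; 0; 4; 3], [:: StepDel 0 3; StepDel 0 0; StepMul 1 2]);
  ([:: 1; 2; 3; 0; 4], [:: StepId 1; StepTensor 0 1; StepDel 2 0; StepDel 3 2]);
  ([:: 1; 2; 3; 4; 0], [:: StepId 1; StepDel 0 0; StepTensor 1 2; StepTensor 0 1;
      StepDel 4 0; StepMul 3 5; StepDel 6 0]);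
  ([:: 1; 2; 4; 0; 3], [:: StepMul 0 0; StepDel 1 1]);
  ([:: 1; 2; 4; 3; 0], [:: StepDel 0 0]);
  ([:: 1; 3; 0; 2; 4], [:: StepMul 0 0; StepId 1; StepTensor 1 2; StepDel 3 0; StepDel 4 2]);
  ([:: 1; 3; 0; 4; 2], [:: StepId 1; StepTensor 1 0; StepTensor 0 1; StepMul 2 3;
      StepDel 4 0; StepDel 5 0]);
  ([:: 1; 3; 2; 0; 4], [:: StepId 1; StepTensor 0 1; StepDel 2 1; StepDel 3 2]);
  ([:: 1; 3; 2; 4; 0], [:: StepId 1; StepDel 0 1; StepTensor 1 2; StepTensor 0 1;
      StepDel 4 1; StepMul 3 5; StepDel 6 0]);
  ([:: 1; 3; 4; 0; 2], [:: StepId 1; StepTensor 0 1; StepDel 2 1; StepDel 3 2]);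
  ([:: 1; 3; 4; 2; 0], [:: StepDel 0 1; StepMul 0 0; StepDel 2 0; StepMul 1 3]);
  ([:: 1; 4; 0; 2; 3], [:: StepMul 0 0; StepDel 1 2]);
  ([:: 1; 4; 0; 3; 2], [:: StepMul 0 0; StepDel 1 1]);
  ([:: 1; 4; 2; 0; 3], [:: StepMul 0 0; StepDel 1 0]);
  ([:: 1; 4; 2; 3; 0], [:: StepId 1; StepDel 0 2; StepTensor 1 2; StepTensor 0 1;
      StepDel 4 2; StepMul 3 5; StepDel 6 0]);
  ([:: 1; 4; 3; 0; 2], [:: StepId 1; StepTensor 0 1; StepDel 2 1; StepDel 3 2]);
  ([:: 1; 4; 3; 2; 0], [:: StepId 1; StepDel 0 1; StepTensor 1 2; StepTensor 0 1;
      StepDel 4 1; StepMul 3 5; StepDel 6 0]);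
  ([:: 2; 0; 1; 3; 4], [:: StepId 1; StepTensor 0 1; StepTensor 1 0; StepMul 2 3;
      StepDel 4 0; StepDel 5 2]);
  ([:: 2; 0; 1; 4; 3], [:: StepDel 0 1; StepDel 0 3; StepMul 1 2]);
  ([:: 2; 0; 3; 1; 4], [:: StepMul 0 0; StepId 1; StepTensor 1 2; StepDel 3 0; StepDel 4 2]);
  ([:: 2; 0; 3; 4; 1], [:: StepMul 0 0; StepDel 1 0]);
  ([:: 2; 0; 4; 1; 3], [:: StepId 1; StepTensor 0 1; StepTensor 1 0; StepMul 2 3;
      StepDel 4 0; StepDel 5 0]);
  ([:: 2; 0; 4; 3; 1], [:: StepMul 0 0; StepDel 1 1]);
  ([:: 2; 1; 0; 3; 4], [:: StepDel 0 3]);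
  ([:: 2; 1; 0; 4; 3], [:: StepDel 0 3]);
  ([:: 2; 1; 3; 0; 4], [:: StepId 1; StepTensor 0 1; StepDel 2 0; StepDel 3 2]);
  ([:: 2; 1; 3; 4; 0], [:: StepDel 0 2]);
  ([:: 2; 1; 4; 0; 3], [:: StepMul 0 0; StepDel 1 2]);
  ([:: 2; 1; 4; 3; 0], [:: StepDel 0 0]);
  ([:: 2; 3; 0; 1; 4], [:: StepId 1; StepTensor 0 1; StepDel 2 4; StepTensor 1 3;
      StepMul 0 4; StepDel 5 1]);
  ([:: 2; 3; 0; 4; 1], [:: StepId 1; StepDel 0 0; StepTensor 1 2; StepDel 3 0]);
  ([:: 2; 3; 1; 0; 4], [:: StepId 1; StepTensor 0 1; StepDel 2 0; StepDel 3 2]);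
  ([:: 2; 3; 1; 4; 0], [:: StepMul 0 0; StepDel 1 1; StepDel 0 0; StepMul 2 3]);
  ([:: 2; 3; 4; 0; 1], [:: StepId 1; StepTensor 0 1; StepTensor 1 0; StepMul 2 3;
      StepDel 4 0; StepDel 5 0]);
  ([:: 2; 3; 4; 1; 0], [:: StepDel 0 0]);
  ([:: 2; 4; 0; 1; 3], [:: StepId 1; StepDel 0 2; StepTensor 1 2; StepDel 3 0]);
  ([:: 2; 4; 0; 3; 1], [:: StepId 1; StepTensor 0 1; StepTensor 1 0; StepMul 2 3;
      StepDel 4 0; StepDel 5 0]);
  ([:: 2; 4; 1; 0; 3], [:: StepId 1; StepDel 0 2; StepTensor 1 2; StepDel 3 0]);
  ([:: 2; 4; 1; 3; 0], [:: StepMul 0 0; StepDel 1 0]);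
  ([:: 2; 4; 3; 0; 1], [:: StepDel 0 3; StepDel 0 1; StepMul 1 2]);
  ([:: 2; 4; 3; 1; 0], [:: StepDel 0 1]);
  ([:: 3; 0; 1; 2; 4], [:: StepId 1; StepTensor 0 1; StepDel 2 1; StepDel 3 2]);
  ([:: 3; 0; 1; 4; 2], [:: StepMul 0 0; StepDel 1 3]);
  ([:: 3; 0; 2; 1; 4], [:: StepId 1; StepTensor 0 1; StepDel 2 2; StepDel 3 2]);
  ([:: 3; 0; 2; 4; 1], [:: StepMul 0 0; StepDel 1 0]);
  ([:: 3; 0; 4; 1; 2], [:: StepId 1; StepTensor 0 1; StepDel 2 3; StepDel 3 2]);
  ([:: 3; 0; 4; 2; 1], [:: StepId 1; StepTensor 0 1; StepDel 2 3; StepDel 3 2]);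
  ([:: 3; 1; 0; 2; 4], [:: StepId 1; StepTensor 0 1; StepDel 2 1; StepDel 3 2]);
  ([:: 3; 1; 0; 4; 2], [:: StepMul 0 0; StepDel 1 2]);
  ([:: 3; 1; 2; 0; 4], [:: StepId 1; StepTensor 0 1; StepDel 2 1; StepDel 3 2]);
  ([:: 3; 1; 2; 4; 0], [:: StepId 1; StepDel 0 1; StepTensor 1 2; StepTensor 0 1;
      StepDel 4 1; StepMul 3 5; StepDel 6 0]);
  ([:: 3; 1; 4; 0; 2], [:: StepId 1; StepTensor 0 1; StepTensor 1 0; StepMul 2 3;
      StepDel 4 0; StepDel 5 2]);
  ([:: 3; 1; 4; 2; 0], [:: StepMul 0 0; StepDel 1 3]);
  ([:: 3; 2; 0; 1; 4], [:: StepId 1; StepTensor 0 1; StepDel 2 2; StepDel 3 2]);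
  ([:: 3; 2; 0; 4; 1], [:: StepId 1; StepDel 0 0; StepTensor 1 2; StepDel 3 0]);
  ([:: 3; 2; 1; 0; 4], [:: StepId 1; StepTensor 0 1; StepDel 2 0; StepDel 3 2]);
  ([:: 3; 2; 1; 4; 0], [:: StepId 1; StepDel 0 0; StepTensor 1 2; StepTensor 0 1;
      StepDel 4 0; StepMul 3 5; StepDel 6 0]);
  ([:: 3; 2; 4; 0; 1], [:: StepDel 0 0; StepDel 0 3; StepMul 1 2]);
  ([:: 3; 2; 4; 1; 0], [:: StepDel 0 0]);
  ([:: 3; 4; 0; 1; 2], [:: StepId 1; StepDel 0 2; StepTensor 1 2; StepTensor 0 1;
      StepDel 4 2; StepMul 3 5; StepDel 6 0]);
  ([:: 3; 4; 0; 2; 1], [:: StepDel 0 3; StepDel 0 0; StepMul 1 2]);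
  ([:: 3; 4; 1; 0; 2], [:: StepDel 0 0; StepDel 0 2; StepMul 1 2]);
  ([:: 3; 4; 1; 2; 0], [:: StepId 1; StepDel 0 0; StepTensor 1 2; StepTensor 0 1;
      StepDel 4 0; StepMul 3 5; StepDel 6 0]);
  ([:: 3; 4; 2; 0; 1], [:: StepId 1; StepDel 0 0; StepTensor 1 2; StepTensor 0 1;
      StepDel 4 3; StepMul 3 5; StepDel 6 1]);
  ([:: 3; 4; 2; 1; 0], [:: StepDel 0 0]);
  ([:: 4; 0; 1; 2; 3], [:: StepId 1; StepTensor 0 1; StepTensor 1 0; StepMul 2 3;
      StepDel 4 3; StepDel 5 0]);
  ([:: 4; 0; 1; 3; 2], [:: StepDel 0 1]);
  ([:: 4; 0; 2; 1; 3], [:: StepId 1; StepTensor 0 1; StepDel 2 2; StepDel 0 2;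
      StepTensor 1 4; StepMul 3 5; StepDel 6 0]);
  ([:: 4; 0; 2; 3; 1], [:: StepId 1; StepTensor 0 1; StepTensor 1 0; StepMul 2 3;
      StepDel 4 1; StepDel 5 0]);
  ([:: 4; 0; 3; 1; 2], [:: StepMul 0 0; StepDel 1 2; StepDel 0 3; StepMul 2 3]);
  ([:: 4; 0; 3; 2; 1], [:: StepId 1; StepTensor 0 1; StepDel 2 2; StepDel 0 2;
      StepTensor 1 4; StepMul 3 5; StepDel 6 0]);
  ([:: 4; 1; 0; 2; 3], [:: StepDel 0 3]);
  ([:: 4; 1; 0; 3; 2], [:: StepDel 0 1]);
  ([:: 4; 1; 2; 0; 3], [:: StepId 1; StepTensor 0 1; StepTensor 1 0; StepMul 2 3;
      StepDel 4 4; StepDel 5 1]);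
  ([:: 4; 1; 2; 3; 0], [:: StepDel 0 1]);
  ([:: 4; 1; 3; 0; 2], [:: StepMul 0 0; StepDel 1 3]);
  ([:: 4; 1; 3; 2; 0], [:: StepDel 0 2]);
  ([:: 4; 2; 0; 1; 3], [:: StepDel 0 2; StepMul 0 0; StepDel 2 3; StepMul 1 3]);
  ([:: 4; 2; 0; 3; 1], [:: StepMul 0 0; StepDel 1 0]);
  ([:: 4; 2; 1; 0; 3], [:: StepId 1; StepTensor 0 1; StepDel 2 1; StepDel 0 1;
      StepTensor 1 4; StepMul 3 5; StepDel 6 0]);
  ([:: 4; 2; 1; 3; 0], [:: StepDel 0 1]);
  ([:: 4; 2; 3; 0; 1], [:: StepId 1; StepTensor 0 1; StepTensor 1 0; StepMul 2 3;
      StepDel 4 1; StepDel 5 0]);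
  ([:: 4; 2; 3; 1; 0], [:: StepDel 0 1]);
  ([:: 4; 3; 0; 1; 2], [:: StepDel 0 2]);
  ([:: 4; 3; 0; 2; 1], [:: StepDel 0 3]);
  ([:: 4; 3; 1; 0; 2], [:: StepDel 0 2]);
  ([:: 4; 3; 1; 2; 0], [:: StepDel 0 2]);
  ([:: 4; 3; 2; 0; 1], [:: StepDel 0 3]);
  ([:: 4; 3; 2; 1; 0], [:: StepDel 0 0])]%N.

Definition certificate (l : seq nat) :=
  (nth ([::], [::]) certificates (find (fun p => p.1 == l) certificates)).2.

Lemma certificates_complete :
  all (fun l => (l == iota 0 5) || certifies l (certificate l)) (permutations (iota 0 5)).
Proof. by vm_compute. Qed.

Definition perm_graph {k} (s : {perm 'I_k}) := [seq nat_of_ord (s i) | i <- enum 'I_k].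

Lemma is_perm_seq_graph {k} (s : {perm 'I_k}) : is_perm_seq k (perm_graph s).
Proof.
rewrite /is_perm_seq size_map size_enum_ord eqxx /=.
rewrite map_inj_uniq ?enum_uniq /=; last by move=> x y /val_inj /perm_inj.
by apply/allP => _ /mapP [i _ ->].
Qed.

Lemma perm_of_graph {k} (s : {perm 'I_k}) : perm_of_seq k (perm_graph s) = s.
Proof.
apply/esym/eq_perm_of_seq => [|i]; first exact: is_perm_seq_graph.
by rewrite /perm_graph (nth_map i) ?nth_ord_enum // size_enum_ord.
Qed.

Lemma perm_graph_permutations {k} (s : {perm 'I_k}) : perm_graph s \in permutations (iota 0 k).
Proof.
have /and3P[_ uniq_s /allP lt_s] := is_perm_seq_graph s.
rewrite mem_permutations; apply: uniq_perm; rewrite ?iota_uniq // => x.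
rewrite mem_iota /=; apply/idP/idP => [/lt_s // | x_k].
by apply/mapP; exists (s^-1 (Ordinal x_k)); rewrite ?mem_enum ?permKV.
Qed.

Section FilteredGroup.
Variable G : forall k, {group {perm 'I_k}}.
Hypotheses (filtered_G : filtered G) (saturated_G : weakly_saturated G).

Definition facts_in (fs : seq perm_fact) :=
  forall f, f \in fs -> is_perm_seq f.1 f.2 /\ perm_of_seq f.1 f.2 \in G f.1.

Lemma facts_in_nth fs a : facts_in fs ->
  let f := nth (0, [::]) fs a in is_perm_seq f.1 f.2 /\ perm_of_seq f.1 f.2 \in G f.1.
Proof.
move=> fsG; case: (ltnP a (size fs)) => a_fs; first exact/fsG/mem_nth.
by rewrite nth_default //= (_ : perm_of_seq 0 [::] = 1) ?group1 //; apply/permP => -[].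
Qed.

Lemma derive_step_sound fs st f : facts_in fs -> derive_step fs st = Some f ->
  is_perm_seq f.1 f.2 -> perm_of_seq f.1 f.2 \in G f.1.
Proof.
move=> fsG; case: st => [k|a b|a b|a i] /=.
- by case=> <- _; rewrite perm_of_seq_iota group1.
- have := facts_in_nth _ a fsG; have := facts_in_nth _ b fsG.
  case: (nth _ fs a) => ka la; case: (nth _ fs b) => kb lb /= [kbl bG] [kal aG].
  case: eqP => // kab [<-] /= kl; subst kb.
  by rewrite -perm_of_seqM // groupM.
- have := facts_in_nth _ a fsG; have := facts_in_nth _ b fsG.
  case: (nth _ fs a) => ka la; case: (nth _ fs b) => kb lb /= [kbl bG] [kal aG] [<-] /= kl.
  by rewrite -perm_of_seq_tensor ?filtered_G.
- have := facts_in_nth _ a fsG; case: (nth _ fs a) => -[|[|n]] la //= [kal aG].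
  case: ifP => // /andP[lt_i adj] [<-] /= kdl.
  rewrite -perm_of_seq_del //; apply: saturated_G => //.
  rewrite /= !perm_of_seqE // !inordK ?(ltnW lt_i) //.
  by case/orP: adj => /eqP ->; [left | right].
Qed.

Lemma derive_sound sts fs fs' : facts_in fs -> derive fs sts = Some fs' -> facts_in fs'.
Proof.
elim: sts fs => [|st sts IH] fs fsG /=; first by case=> <-.
case Ef: (derive_step fs st) => [f|] //; case: ifP => // kf.
apply: IH => g; rewrite mem_rcons inE => /orP[/eqP-> | /fsG //].
by split=> //; apply: derive_step_sound Ef kf.
Qed.

Lemma gap_tperm01_seq :
  gap_tperm 0 = perm_of_seq 2 [:: 1; 0]%N /\ gap_tperm 1 = perm_of_seq 3 [:: 2; 1; 0]%N.
Proof.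
by split; apply: eq_perm_of_seq => // -[[|[|[|]]] ?] //; rewrite val_tperm.
Qed.

Lemma certifies_sound l c : is_perm_seq 5 l -> perm_of_seq 5 l \in G 5 -> certifies l c ->
  gap_tperm 0 \in G 2 \/ gap_tperm 1 \in G 3.
Proof.
move=> kl lG; rewrite /certifies; case E: derive => [fs|] //.
have fsG : facts_in fs by apply: derive_sound E => f; rewrite inE => /eqP->.
have [-> ->] := gap_tperm01_seq.
by case/orP => /fsG[]; [left | right].
Qed.

Lemma gap_tperm_of_nontrivial_G5 (s : {perm 'I_5}) : s \in G 5 -> s != 1 ->
  gap_tperm 0 \in G 2 \/ gap_tperm 1 \in G 3.
Proof.
move=> sG s1; have := allP certificates_complete _ (perm_graph_permutations s).
case: eqP => [gs | _ /certifies_sound]; last first.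
  by apply; rewrite ?is_perm_seq_graph ?perm_of_graph.
by case/eqP: s1; rewrite -(perm_of_graph s) gs perm_of_seq_iota.
Qed.

Lemma tperm_in_of_gap_tperm d : gap_tperm d \in G d.+2 ->
  forall k (x y : 'I_k), y = x + d.+1 :> nat -> tperm x y \in G k.
Proof.
move=> gapG k x y yx.
have [a xa] : exists a, nat_of_ord x = a by exists x.
have [b kE] : exists b, k = a + d.+2 + b by exists (k - a - d.+2); have := ltn_ord y; lia.
subst k.
suff -> : tperm x y = tensor (tensor (1 : {perm 'I_a}) (gap_tperm d)) 1.
  by rewrite !filtered_G ?group1.
apply/permP => z; apply: ord_inj; rewrite val_tperm.
case: (split_ordP z) => {}z ->; last first.
  by rewrite tensor_rshift perm1 /=; have := ltn_ord z; repeat case: eqP => ? /=; try lia.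
rewrite tensor_lshift /=; case: (split_ordP z) => {}z ->.
  by rewrite tensor_lshift perm1 /=; have := ltn_ord z; repeat case: eqP => ? /=; try lia.
rewrite tensor_rshift /= val_tperm /=; have := ltn_ord z.
by repeat case: eqP => ? /=; try lia.
Qed.

Lemma full_of_gap_tperm0 : gap_tperm 0 \in G 2 ->
  forall k, G k = [set: {perm 'I_k}] :> {set _}.
Proof.
move=> gapG k; apply/eqP; rewrite eqEsubset subsetT; apply/subsetP => s _.
apply: (@perm_in_of_tperm _ _ (fun=> tt)) => // x y _.
by apply: (tperm_in_of_translates _ _ 0 (tperm_in_of_gap_tperm _ gapG k)); rewrite !modn1.
Qed.

Lemma Sstar_sub_of_gap_tperm1 : gap_tperm 1 \in G 3 -> forall k, Sstar k \subset G k.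
Proof.
move=> gapG k; apply/subsetP => s /SstarP.
apply: (@perm_in_of_tperm _ _ (fun z : 'I_k => odd z)) => x y xy.
by apply: (tperm_in_of_translates _ _ 1 (tperm_in_of_gap_tperm _ gapG k)); rewrite !modn2 xy.
Qed.

Lemma has_tperm01_tensor1 K : has_tperm01 (G K) -> has_tperm01 (G (K + 1)).
Proof.
move=> [x [y [x0 y1 xyG]]]; exists (lshift 1 x), (lshift 1 y); split => //.
suff -> : tperm (lshift 1 x) (lshift 1 y) = tensor (tperm x y) 1.
  by rewrite filtered_G ?group1.
apply/permP => z; apply: ord_inj; rewrite val_tperm.
case: (split_ordP z) => w ->.
  by rewrite tensor_lshift /= val_tperm; case: ifP => // _; case: ifP.
have := ltn_ord y; have := ltn_ord w.
by rewrite tensor_rshift perm1 /=; repeat case: eqP => ? /=; try lia.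
Qed.

Lemma has_tperm01_del n : has_tperm01 (G n.+4) -> has_tperm01 (G n.+2).
Proof.
move=> [x [y [x0 y1 xyG]]]; exists (inord 0), (inord 1); rewrite !inordK //; split => //.
have <- : del (tperm x y) n.+2 = tperm (inord 0) (inord 1).
  apply: del_of_raw => j; apply: ord_inj; have jn := ltn_ord j.
  rewrite /del_raw /= !val_tperm !inordK ?x0 ?y1 //; try lia.
  rewrite jn insubdK; last first.
    by rewrite unfold_in /=; repeat case: ifP => ?; try lia.
  have -> : minn (if n.+2 == 0 then 1 else if n.+2 == 1 then 0 else n.+2)%N
      (if n.+3 == 0 then 1 else if n.+3 == 1 then 0 else n.+3)%N = n.+2 by apply/minn_idPl.
  case: (nat_of_ord j) jn => [|[|j']] /= jn //; case: ifP => //; lia.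
  by rewrite jn; lia.
apply: (saturated_G n.+2 (tperm x y) n.+2 xyG) => //; left.
by rewrite /= !val_tperm !inordK ?x0 ?y1.
Qed.

Lemma has_tperm01_G2 K : 1 < K -> has_tperm01 (G K) -> has_tperm01 (G 2).
Proof.
elim/ltn_ind: K => K IH; case: K IH => [|[|[|[|n]]]] IH K1 h //.
  exact/(has_tperm01_del 0)/(has_tperm01_tensor1 3).
by apply: (IH n.+2) => //; apply: has_tperm01_del.
Qed.

Lemma has_tperm01_of_notin_Sstar k (s : {perm 'I_k}) : (forall k, Sstar k \subset G k) ->
  s \in G k -> s \notin Sstar k -> has_tperm01 (G (k + 2)).
Proof.
move=> SG sG; rewrite inE negb_forall => /existsP [r sr].
pose c := if odd r == odd k then ord0 else ord_max : 'I_2.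
have oc : odd (rshift k c) = odd r.
  by rewrite /= oddD /c; case: eqP => [->|]; [rewrite addbF | case: odd; case: odd].
have rcG : tperm (lshift 2 r) (rshift k c) \in G (k + 2).
  by rewrite (subsetP (SG _)) // tperm_Sstar // oc.
have := groupJ rcG (_ : tensor s 1 \in G (k + 2)).
rewrite tpermJ tensor_lshift tensor_rshift perm1 => srcG.
apply: has_tperm01_of_mixed_tperm (SG _) _ (srcG _); first by rewrite oc.
by rewrite filtered_G ?group1.
Qed.

Lemma gap_tperm0_of_notin_Sstar k (s : {perm 'I_k}) : (forall k, Sstar k \subset G k) ->
  s \in G k -> s \notin Sstar k -> gap_tperm 0 \in G 2.
Proof.
move=> SG sG sS; apply/gap_tperm0_of_has_tperm01/(has_tperm01_G2 (k + 2)).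
  by rewrite addn2.
exact: has_tperm01_of_notin_Sstar sG sS.
Qed.

End FilteredGroup.

Theorem proposition2p4 (G : forall k, {group {perm 'I_k}}) :
  filtered G -> weakly_saturated G ->
  (G 5 : {set {perm 'I_5}}) != 1%g ->
  (forall k, (G k : {set {perm 'I_k}}) = [set: {perm 'I_k}]) \/
  (forall k, (G k : {set {perm 'I_k}}) = Sstar k).
Proof.
move=> filtered_G saturated_G /trivgPn [s sG s1].
have [gap0G | gap0G] := boolP (gap_tperm 0 \in G 2).
  by left; apply: full_of_gap_tperm0.
have gap1G : gap_tperm 1 \in G 3.
  by case: (gap_tperm_of_nontrivial_G5 G filtered_G saturated_G s sG s1) gap0G => [->|].
have SG := Sstar_sub_of_gap_tperm1 G filtered_G gap1G.
right => k; apply/eqP; rewrite eqEsubset SG andbT.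
apply/subsetP => t tG; apply: contraR gap0G => tS.
exact: gap_tperm0_of_notin_Sstar G filtered_G saturated_G k t SG tG tS.
Qed.
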